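(* Let $R$ be an associative ring with identity and involution $*$, and let $a\in R^{\#}\cap R^{\dagger}$. Then $a\in R^{SEP}$ if and only if $a(a^{\#})^*a^{\dagger}a^{\#}$ is a projection, i.e. $a(a^{\#})^*a^{\dagger}a^{\#}\in PE(R)$.
   Context: An involution on $R$ is a map $x\mapsto x^*$ with $(x^* )^*=x$, $(x+y)^*=x^*+y^*$, $(xy)^*=y^*x^*$. An element $a$ is Moore–Penrose invertible if there is $b$ with $aba=a$, $bab=b$, $(ab)^*=ab$, $(ba)^*=ba$; such $b$ is unique, denoted $a^{\dagger}$, and $R^{\dagger}$ is the set of such $a$. An element $a$ is group invertible if there is $b$ with $aba=a$, $bab=b$, $ab=ba$; such $b$ is unique, denoted $a^{\#}$, and $R^{\#}$ is the set of such $a$. $PE(R)=\{e\in R: e^2=e=e^*\}$ is the set of projections. For $a\in R^{\#}\cap R^{\dagger}$: $a$ is EP if $a^{\#}=a^{\dagger}$; $a$ is a partial isometry if $a^*=a^{\dagger}$; $a$ is SEP (strongly EP) if $a^*=a^{\dagger}=a^{\#}$. $R^{SEP}$ denotes the set of SEP elements. *)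

From mathcomp Require Import all_boot all_algebra.
Set Implicit Arguments. Unset Strict Implicit. Unset Printing Implicit Defensive.
Import GRing.Theory.
Local Open Scope ring_scope.

Definition involution (R : pzRingType) (star : R -> R) : Prop :=
  [/\ forall x, star (star x) = x,
      forall x y, star (x + y) = star x + star y &
      forall x y, star (x * y) = star y * star x].

Definition is_MP_inverse (R : pzRingType) (star : R -> R) (a b : R) : Prop :=
  [/\ a * b * a = a, b * a * b = b, star (a * b) = a * b & star (b * a) = b * a].

Definition is_group_inverse (R : pzRingType) (a b : R) : Prop :=
  [/\ a * b * a = a, b * a * b = b & a * b = b * a].

Definition is_projection (R : pzRingType) (star : R -> R) (e : R) : Prop :=
  e * e = e /\ e = star e.

Definition is_SEP (R : pzRingType) (star : R -> R) (a : R) : Prop :=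
  exists b c : R, [/\ is_group_inverse a b, is_MP_inverse star a c,
                      star a = c & c = b].

From mathcomp Require Import all_boot all_algebra.
Local Open Scope ring_scope.
Import GRing.Theory.
Set Implicit Arguments. Unset Strict Implicit.

(* Write e = a (a^#)^* a^+ a^#.  If a is SEP then a^* = a^+ = a^#, so e = a a^#,
   a hermitian idempotent.  Conversely, e (a a a^* a^+) = a a^+, so if e is
   idempotent then e fixes a a^+, hence e a = a and e = e a a^# = a a^#.  If e
   is moreover hermitian, a^# is a Moore-Penrose inverse of a, so a^+ = a^#,
   and the identity a (a^#)^* a^# a^# = a a^# then yields (a^#)^* = a. *)

Section Involution.

Variables (R : pzRingType) (star : R -> R).
Hypothesis star_inv : involution star.

Lemma starK : involutive star.
Proof. by case: star_inv. Qed.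

Lemma starM x y : star (x * y) = star y * star x.
Proof. by case: star_inv. Qed.

Lemma MP_inverse_unique a b c :
  is_MP_inverse star a b -> is_MP_inverse star a c -> b = c.
Proof.
case=> aba bab ab_sa ba_sa [aca cac ac_sa ca_sa].
have sa_ac : star a = star a * (a * c).
  by rewrite -ac_sa -starM aca.
have sa_ba : star a = b * a * star a.
  by rewrite -ba_sa -starM mulrA aba.
have b_bac : b = b * a * c.
  rewrite -{1}bab -mulrA -ab_sa starM sa_ac (mulrA (star b)) -starM ab_sa.
  by rewrite !mulrA bab.
have c_bac : c = b * a * c.
  rewrite -{1}cac -ca_sa starM sa_ba -(mulrA _ (star a)) -starM ca_sa.
  by rewrite -mulrA cac.
by rewrite b_bac -c_bac.
Qed.

Lemma group_inverse_unique (a b c : R) :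
  is_group_inverse a b -> is_group_inverse a c -> b = c.
Proof.
case=> aba bab ab_ba [aca cac ac_ca].
have ab_ca : a * b = c * a.
  by rewrite -{1}aca ac_ca -!mulrA ab_ba (mulrA a) aba.
by rewrite -bab -mulrA ab_ca -ac_ca mulrA -ab_ba ab_ca cac.
Qed.

Lemma group_inverse_MP a b :
  is_group_inverse a b -> star (a * b) = a * b -> is_MP_inverse star a b.
Proof. by case=> aba bab ab_ba ab_sa; split=> //; rewrite -ab_ba. Qed.

Section GroupInverse.

Variables a ag : R.
Hypothesis ag_grp : is_group_inverse a ag.

Lemma group_inverse_star_eq :
  star (a * ag) = a * ag -> a * star ag * ag * ag = a * ag -> star ag = a.
Proof.
case: ag_grp => aga gag ag_c aag_herm a_sag_gg.
have ga_herm : star (ag * a) = ag * a by rewrite -ag_c.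
have a_sag_ag : a * star ag * ag = a.
  by rewrite -{2}aga -a_sag_gg -!mulrA -ag_c (mulrA ag a ag) gag.
have aa : a * a = a * star ag.
  by rewrite -{1}a_sag_ag -mulrA -ga_herm -mulrA -starM gag.
by rewrite -{1}gag -mulrA starM aag_herm ag_c -mulrA -aa mulrA -ag_c aga.
Qed.

End GroupInverse.

Section StronglyEP.

Variables a ag ad : R.
Hypotheses (ag_grp : is_group_inverse a ag) (ad_mp : is_MP_inverse star a ad).

Local Notation e := (a * star ag * ad * ag).

Lemma SEP_inverses : is_SEP star a -> star a = ag /\ ad = ag.
Proof.
case=> b [c [b_grp c_mp sa_c c_b]].
rewrite sa_c (MP_inverse_unique ad_mp c_mp) c_b.
by rewrite (group_inverse_unique b_grp ag_grp).
Qed.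

Lemma SEP_projection : is_SEP star a -> is_projection star e.
Proof.
case: ag_grp => aga _ ag_c; case: ad_mp => _ _ aad_herm _.
move/SEP_inverses => [sa ad_ag].
have sag : star ag = a by rewrite -sa starK.
rewrite sag ad_ag.
have -> : a * a * ag * ag = a * ag by rewrite -(mulrA a a) ag_c mulrA aga.
by split; [rewrite mulrA aga | rewrite -ad_ag aad_herm].
Qed.

Lemma idempotent_mul_a : e * e = e -> e * a = a.
Proof.
case: ag_grp => aga _ ag_c; case: ad_mp => ada dad _ da_herm.
move=> e_idem; set e := e in e_idem *.
have agaa x : x * ag * a * a = x * a by rewrite -!mulrA (mulrA ag) -ag_c aga.
have dasa x : x * ad * a * star a = x * star a.
  by rewrite -!mulrA (mulrA ad a) -da_herm -starM mulrA ada.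
have saag_sa : star (a * ag) * star a = star a.
  by rewrite -starM ag_c mulrA aga.
have saag_ad x : x * star (a * ag) * ad = x * ad.
  rewrite -{1}dad -da_herm (starM ad a) !mulrA -(mulrA x) saag_sa.
  by rewrite -(mulrA x) -starM da_herm -mulrA dad.
have e_x : e * (a * a * star a * ad) = a * ad.
  by rewrite /e !mulrA agaa dasa -(mulrA a) -starM saag_ad.
have e_aad : e * (a * ad) = a * ad by rewrite -{1}e_x mulrA e_idem e_x.
by rewrite -{1}ada mulrA e_aad ada.
Qed.

Lemma idempotent_eq_group_projector : e * e = e -> e = a * ag.
Proof.
case: ag_grp => _ gag _ e_idem.
have e_a := idempotent_mul_a e_idem; set e := e in e_idem e_a *.
have e_aag : e * (a * ag) = e.
  by rewrite /e !mulrA -(mulrA _ ag a) -!mulrA (mulrA ag) gag.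
by rewrite -{1}e_aag mulrA e_a.
Qed.

End StronglyEP.

End Involution.

Theorem theorem2p1 (R : pzRingType) (star : R -> R) (a ag ad : R) :
  involution star ->
  is_group_inverse a ag ->
  is_MP_inverse star a ad ->
  (is_SEP star a <-> is_projection star (a * star ag * ad * ag)).
Proof.
move=> star_inv ag_grp ad_mp; split; first exact: SEP_projection.
case=> e_idem e_herm.
have e_aag := idempotent_eq_group_projector star_inv ag_grp ad_mp e_idem.
have aag_herm : star (a * ag) = a * ag by rewrite -e_aag -e_herm.
have ag_mp := group_inverse_MP ag_grp aag_herm.
have ad_ag : ad = ag := MP_inverse_unique star_inv ad_mp ag_mp.
rewrite ad_ag in e_aag.
have sag := group_inverse_star_eq star_inv ag_grp aag_herm e_aag.
by exists ag, ag; split; rewrite // -sag starK.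
Qed.
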